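(* Let $A$, $I$ and $d$ be fixed positive integers with $d<\min\{I,A-1\}$. Let $\mathbb{P}(C)$ be the probability that a profile chosen uniformly at random from $\mathcal{P}_{A,I}$ contains a circulant pathology of size $k\geq d+2$. Then $$\mathbb{P}(C) \geq 1 - \left(1 - \sum_{k=d+2}^{I} B_k \right)^{\left\lfloor \frac{A}{d+2} \right\rfloor},$$ where $$B_k=\binom{I}{k} \genfrac\{\}{0pt}{0}{k}{d+2} (d+2)! \left(\frac{1}{(d+2)!}\right)^k \left(1 - \frac{d+2}{(d+2)!}\right)^{I-k}$$ and $\genfrac\{\}{0pt}{1}{k}{d+2}$ denotes a Stirling number of the second kind.
   Context: There are $A$ alternatives and $I$ individuals. A preference is a strict total order (ranking without ties) on the $A$ alternatives; $a>_i b$ means individual $i$ prefers $a$ to $b$. A profile assigns a preference to each of the $I$ individuals; $\mathcal{P}_{A,I}$ is the set of all profiles, so a uniformly random profile assigns to each individual an independent uniformly random preference among the $A!$ possible ones. A circulant pathology of size $k$ in a profile consists of $k$ distinct alternatives $a_1,\dots,a_k$ and $k$ distinct individuals $1,\dots,k$ such that for each $j\in\{1,\dots,k\}$, individual $j$'s preference restricted to $\{a_1,\dots,a_k\}$ is $a_j >_j a_{j+1} >_j \dots >_j a_k >_j a_1 >_j \dots >_j a_{j-1}$ (the cyclic shift of $a_1>\dots>a_k$ starting at $a_j$). *)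

From mathcomp Require Import all_boot all_order all_algebra all_fingroup.
From mathcomp Require Import boolp.
Set Implicit Arguments. Unset Strict Implicit. Unset Printing Implicit Defensive.
Import GRing.Theory Num.Theory.

Fixpoint stirling2 (n k : nat) : nat :=
  match n, k with
  | 0, 0 => 1
  | 0, _.+1 => 0
  | _.+1, 0 => 0
  | n'.+1, k'.+1 => k'.+1 * stirling2 n' k'.+1 + stirling2 n' k'
  end.

(* A preference on the A alternatives 'I_A is encoded by a permutation
   sigma : {perm 'I_A} giving the rank of each alternative (rank 0 = best):
   a >_sigma b  iff  sigma a < sigma b.  This is a bijection between
   {perm 'I_A} and strict total orders on 'I_A. *)
Definition prefers (A : nat) (sigma : {perm 'I_A}) (a b : 'I_A) : bool :=
  (sigma a < sigma b)%N.

Definition profile (A I : nat) := {ffun 'I_I -> {perm 'I_A}}.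

Definition circulant_pathology (A I : nat) (P : profile A I) (k : nat) : Prop :=
  exists (a : nat -> 'I_A) (ind : nat -> 'I_I),
    {in [pred x | (x < k)%N] &, injective a} /\
    {in [pred x | (x < k)%N] &, injective ind} /\
    forall j t u, (j < k)%N -> (t < u)%N -> (u < k)%N ->
      prefers (P (ind j)) (a ((j + t) %% k)) (a ((j + u) %% k)).

Definition prob_circ (A I m : nat) : rat :=
  (#|[set P : profile A I |
       `[< exists k, (m <= k)%N /\ circulant_pathology P k >]]|%:R
   / #|[set: profile A I]|%:R)%R.

Local Open Scope ring_scope.

Definition Bk (I d k : nat) : rat :=
  ('C(I, k))%:R * (stirling2 k d.+2)%:R * (d.+2)`!%:R
  * (1 / (d.+2)`!%:R) ^+ k
  * (1 - d.+2%:R / (d.+2)`!%:R) ^+ (I - k).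

(* Cut the alternatives into m = A %/ n disjoint blocks of n = d + 2
   consecutive alternatives.  If every cyclic shift of the natural order of a
   block is the preference restricted to that block of some individual, the
   block is a circulant pathology of size n.  The restrictions to a block form
   a map from the individuals to the n! orders of the block, and counting the
   maps whose image contains the n cyclic shifts gives the proportion
   sum_k B_k.  The blocks behave independently: composing a profile with an
   arbitrary permutation of each block is a bijection of profiles which
   translates the restricted orders of each block separately, so double
   counting over these permutations shows that the proportion of profiles in
   which no block works is (1 - sum_k B_k)^m. *)

From mathcomp Require Import all_boot all_order all_algebra all_fingroup.
From mathcomp Require Import boolp.
From mathcomp Require Import ring.
Set Implicit Arguments. Unset Strict Implicit. Unset Printing Implicit Defensive.
Import GRing.Theory Num.Theory.

Definition nsurj (k t : nat) : nat := t`! * stirling2 k t.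

Lemma nsurj0 t : nsurj 0 t = (t == 0).
Proof. by case: t => [|t]; rewrite /nsurj /= ?muln0. Qed.

Lemma nsurjS k t : nsurj k.+1 t = t * (nsurj k t + nsurj k t.-1).
Proof.
case: t => [|t]; first by rewrite /nsurj /= !muln0 mul0n.
by rewrite /nsurj /= factS; ring.
Qed.

Lemma stirling2_small k t : k < t -> stirling2 k t = 0.
Proof. by elim: k t => [|k IH] [|t] //= ltkt; rewrite !IH ?muln0 // ltnW. Qed.

(* The number of maps from an I-set to a (t + u)-set whose image contains a
   fixed t-subset: choose the k points sent into that subset, a surjection
   onto it, and any map of the other points into the remaining u points. *)
Definition ncover (I t u : nat) : nat :=
  \sum_(0 <= k < I.+1) 'C(I, k) * nsurj k t * u ^ (I - k).

Lemma ncover0 t u : ncover 0 t u = (t == 0).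
Proof. by rewrite /ncover big_nat1 nsurj0 bin0 mul1n muln1. Qed.

Lemma ncoverS I t u :
  ncover I.+1 t u = (u + t) * ncover I t u + t * ncover I t.-1 u.
Proof.
have outside : \sum_(0 <= k < I.+1) 'C(I, k.+1) * nsurj k.+1 t * u ^ (I - k)
                 + 'C(I.+1, 0) * nsurj 0 t * u ^ (I.+1 - 0) = u * ncover I t u.
  rewrite /ncover big_nat_recr //= bin_small // !mul0n addn0.
  rewrite big_nat_recl // mulnDr addnC; congr (_ + _).
    by rewrite !bin0 !subn0 expnS; ring.
  rewrite big_distrr /=; apply: eq_big_nat => k /andP[_ ltkI].
  by rewrite -(subnSK ltkI) expnS; ring.
have inside : \sum_(0 <= k < I.+1) 'C(I, k) * nsurj k.+1 t * u ^ (I - k)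
                = t * ncover I t u + t * ncover I t.-1 u.
  rewrite /ncover !big_distrr -big_split /=; apply: eq_big_nat => k _.
  by rewrite nsurjS; ring.
rewrite /ncover big_nat_recl //.
under eq_big_nat => k _ do rewrite binS subSS mulnDl mulnDl.
rewrite big_split /= -/(ncover I t u) addnCA inside addnA outside.
rewrite -/(ncover I t.-1 u); ring.
Qed.

Lemma ncover_shift I t u : ncover I t u.+1 = ncover I t.+1 u + ncover I t u.
Proof.
elim: I t => [|I IH] t; first by rewrite !ncover0; case: t.
by rewrite !ncoverS; case: t => [|t] /=; rewrite ?IH; ring.
Qed.

Lemma card_set_sum (T : finType) (P : pred T) : #|[set x | P x]| = \sum_x P x.
Proof.
rewrite -sum1_card big_mkcond /=; apply: eq_bigr => x _.
by rewrite inE; case: (P x).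
Qed.

Section Covering.
Variable X : finType.

Definition fcons I (x : X) (g : {ffun 'I_I -> X}) : {ffun 'I_I.+1 -> X} :=
  [ffun i => if unlift ord0 i is Some j then g j else x].

Lemma fcons_bij I : bijective (fun p : X * {ffun 'I_I -> X} => fcons p.1 p.2).
Proof.
exists (fun g : {ffun 'I_I.+1 -> X} => (g ord0, [ffun j => g (lift ord0 j)])).
  move=> [x g]; rewrite /fcons /= ffunE unlift_none; congr (_, _).
  by apply/ffunP => j; rewrite !ffunE liftK.
move=> g; apply/ffunP => i; rewrite /fcons /= ffunE.
by case: unliftP => [j ->|->] //=; rewrite ffunE.
Qed.

Lemma codom_fcons I x (g : {ffun 'I_I -> X}) y :
  (y \in codom (fcons x g)) = (y == x) || (y \in codom g).
Proof.
apply/codomP/orP => [[i ->]|[/eqP ->|/codomP [j ->]]].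
- rewrite /fcons ffunE; case: unliftP => [j _|_]; last by left.
  by right; apply/codomP; exists j.
- by exists ord0; rewrite /fcons ffunE unlift_none.
- by exists (lift ord0 j); rewrite /fcons ffunE liftK.
Qed.

Lemma card_covering0 (T : {set X}) :
  #|[set g : {ffun 'I_0 -> X} | T \subset codom g]| = (#|T| == 0).
Proof.
have codom0 (g : {ffun 'I_0 -> X}) : codom g =i pred0 by move=> y; apply/codomP => -[[]].
case: (set_0Vmem T) => [->|[x xT]].
  rewrite cards0 (eq_card (B := [set: {ffun 'I_0 -> X}])) => [|g].
    by rewrite cardsT card_ffun card_ord.
  by rewrite !inE; apply/subsetP => y; rewrite inE.
have/negbTE -> : #|T| != 0 by rewrite -lt0n; apply/card_gt0P; exists x.
apply/eqP; rewrite cards_eq0; apply/eqP/setP => g; rewrite !inE.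
by apply/negbTE/negP => /subsetP /(_ x xT); rewrite codom0.
Qed.

Lemma card_covering_fcons I (T : {set X}) x :
  \sum_(g : {ffun 'I_I -> X}) (T \subset codom (fcons x g))
  = #|[set g : {ffun 'I_I -> X} | T :\ x \subset codom g]|.
Proof.
rewrite card_set_sum; apply: eq_bigr => g _; congr nat_of_bool.
apply/subsetP/subsetP => sub y.
  by rewrite !inE => /andP[yx /sub]; rewrite codom_fcons (negbTE yx).
rewrite codom_fcons => yT; case: eqP => //= yx; apply: sub.
by rewrite !inE yT andbT; apply/eqP.
Qed.

Lemma card_covering I (T : {set X}) :
  #|[set g : {ffun 'I_I -> X} | T \subset codom g]| = ncover I #|T| (#|X| - #|T|).
Proof.
elim: I T => [|I IH] T; first by rewrite card_covering0 ncover0.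
rewrite card_set_sum (reindex _ (onW_bij _ (@fcons_bij I))) /=.
rewrite -(pair_bigA _ (fun x g => T \subset codom (fcons x g) : nat)) /=.
under eq_bigr => x _ do rewrite card_covering_fcons IH.
have leTX : #|T| <= #|X| by apply: max_card.
rewrite (bigID (mem T)) /=.
rewrite (eq_bigr (fun _ => ncover I #|T|.-1 (#|X| - #|T|).+1)); last first.
  move=> x xT; have cardT := cardsD1 x T; rewrite xT add1n in cardT.
  rewrite cardT /= subnS prednK // subn_gt0; apply: leq_trans leTX.
  by rewrite cardT.
rewrite [X in _ + X](eq_bigr (fun _ => ncover I #|T| (#|X| - #|T|))); last first.
  move=> x xT; suff -> : T :\ x = T by [].
  by apply/setP => y; rewrite !inE; case: eqP => // ->; rewrite (negbTE xT).
rewrite !sum_nat_const ncoverS -(cardC (mem T)) addKn.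
by case: #|T| leTX => [|t] _ /=; rewrite ?ncover_shift; ring.
Qed.

End Covering.

Lemma card_ffun_forall (J Y : finType) (F : J -> pred Y) :
  #|[set z : {ffun J -> Y} | [forall b, F b (z b)]]| = \prod_b #|[set y | F b y]|.
Proof.
rewrite card_set_sum; under [RHS]eq_bigr => b _ do rewrite card_set_sum.
rewrite bigA_distr_bigA /=; apply: eq_bigr => z _.
have [allF | /forallPn [b notF]] := boolP [forall b, F b (z b)].
  by rewrite big1 // => b _; rewrite (forallP allF b).
by rewrite (bigD1 b) //= (negbTE notF) mul0n.
Qed.

Lemma double_count (T Z : finType) (act : T -> Z -> T) (B : pred T) (c : nat) :
  (forall z, injective (act ^~ z)) -> (forall x, #|[set z | B (act x z)]| = c) ->
  #|[set x | B x]| * #|Z| = #|T| * c.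
Proof.
move=> act_inj cardB.
transitivity (\sum_(z : Z) \sum_(x : T) B (act x z)).
  rewrite mulnC -sum_nat_const; apply: eq_bigr => z _.
  by rewrite card_set_sum (reindex_inj (act_inj z)).
rewrite exchange_big -sum_nat_const; apply: eq_bigr => x _.
by rewrite -(cardB x) card_set_sum.
Qed.

Section Rank.
Variables (N : nat) (key : 'I_N -> nat).

Lemma ord_rank_subproof r : #|[set r' | key r' < key r]| < N.
Proof.
rewrite -[N in _ < N]card_ord -cardsT; apply: proper_card.
by rewrite properT; apply/eqP => /setP /(_ r); rewrite !inE ltnn.
Qed.

Definition ord_rank r : 'I_N := Ordinal (ord_rank_subproof r).

Hypothesis key_inj : injective key.

Lemma ord_rank_lt r r' : (ord_rank r < ord_rank r') = (key r < key r').
Proof.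
have mono s s' : key s < key s' -> ord_rank s < ord_rank s'.
  move=> lt_ss'; apply: (@proper_card _ [set x | key x < key s]).
  apply/properP; split.
    by apply/subsetP => x; rewrite !inE => /ltn_trans; apply.
  by exists s; rewrite !inE ?ltnn.
case: (ltngtP (key r) (key r')) => [/mono //| /mono lt_r'r | /key_inj ->].
  by apply/negbTE; rewrite -leqNgt; apply: ltnW.
by rewrite ltnn.
Qed.

Lemma ord_rank_inj : injective ord_rank.
Proof.
move=> r r' eq_rank; apply: key_inj.
by case: (ltngtP (key r) (key r')) => [||->] //; rewrite -ord_rank_lt eq_rank ltnn.
Qed.

End Rank.

Lemma ord_rank_perm N (key key' : 'I_N -> nat) (h : {perm 'I_N}) :
  (forall r, key' r = key (h r)) -> forall r, ord_rank key' r = ord_rank key (h r).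
Proof.
move=> key'E r; apply: val_inj => /=.
rewrite -(card_preimset [set r' | key r' < key (h r)] (@perm_inj _ h)).
by apply: eq_card => r'; rewrite !inE !key'E.
Qed.

Section Rotations.
Variables (I k : nat).
Local Notation n := k.+1.

Definition rot_fun (j t : 'I_n) : 'I_n := inord ((j + t) %% n).

Lemma rot_fun_val j t : rot_fun j t = (j + t) %% n :> nat.
Proof. by rewrite inordK // ltn_pmod. Qed.

Lemma rot_fun_inj j : injective (rot_fun j).
Proof.
move=> t t' /(congr1 val); rewrite /= !rot_fun_val => /eqP.
by rewrite eqn_modDl !modn_small // => /eqP /val_inj.
Qed.

Definition rot j : {perm 'I_n} := perm (@rot_fun_inj j).

Lemma rot_val j t : rot j t = (j + t) %% n :> nat.
Proof. by rewrite permE rot_fun_val. Qed.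

Lemma rot_inj : injective rot.
Proof.
move=> j j' /(congr1 (fun r : {perm 'I_n} => r ord0 : nat)).
by rewrite !rot_val !addn0 !modn_small // => /val_inj.
Qed.

(* In the encoding of [prefers], [(rot j)^-1] is the preference
   j > j + 1 > ... > j - 1 (mod n). *)
Definition rotations : {set {perm 'I_n}} := [set (rot j)^-1 | j : 'I_n]%g.

Definition covers_rotations (g : {ffun 'I_I -> {perm 'I_n}}) : bool :=
  rotations \subset codom g.

Definition noncovering : {set {ffun 'I_I -> {perm 'I_n}}} :=
  [set g | ~~ covers_rotations g].

Lemma card_noncovering : #|noncovering| + ncover I n (n`! - n) = n`! ^ I.
Proof.
have card_rot : #|rotations| = n.
  by rewrite card_imset ?card_ord // => j j' /invg_inj /rot_inj.
have := card_covering I rotations; rewrite card_rot card_Sn => <-.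
rewrite addnC -[n`!]card_Sn -[I in _ ^ I]card_ord -card_ffun.
rewrite -(cardsC [set g | covers_rotations g]); congr (_ + _).
by apply: eq_card => g; rewrite !inE.
Qed.

End Rotations.

Section Blocks.
Variables (A I m k : nat).
Local Notation n := k.+1.
Hypothesis blocks_fit : m * n <= A.

Lemma blk_subproof (b : 'I_m) (r : 'I_n) : b * n + r < A.
Proof.
apply: (@leq_trans (b.+1 * n)); first by rewrite mulSn addnC ltn_add2r.
by apply: leq_trans blocks_fit; rewrite leq_mul2r ltn_ord orbT.
Qed.

Definition blk (b : 'I_m) (r : 'I_n) : 'I_A := Ordinal (blk_subproof b r).

Lemma blk_inj b r b' r' : blk b r = blk b' r' -> b = b' /\ r = r'.
Proof.
move/(congr1 val) => /= eq_blk.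
have := congr1 (divn^~ n) eq_blk; have := congr1 (modn^~ n) eq_blk.
rewrite /= !modnMDl !modn_small // => /val_inj ->.
by rewrite !divnMDl // !divn_small // !addn0 => /val_inj ->.
Qed.

Definition block_permf (h : {ffun 'I_m -> {perm 'I_n}}) (x : 'I_A) : 'I_A :=
  if [pick z : 'I_m * 'I_n | blk z.1 z.2 == x] is Some z
  then blk z.1 (h z.1 z.2) else x.

Lemma block_permf_blk h b r : block_permf h (blk b r) = blk b (h b r).
Proof.
rewrite /block_permf; case: pickP => [[b' r'] /eqP /= /blk_inj [-> ->] //|].
by move/(_ (b, r)); rewrite /= eqxx.
Qed.

Lemma block_permf_inj h : injective (block_permf h).
Proof.
move=> x y; rewrite /block_permf.
case: pickP => [[b r] /eqP /= <- | notblk_x];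
  case: pickP => [[b' r'] /eqP /= <- | notblk_y] //.
- by case/blk_inj => <- /perm_inj ->.
- by move=> eq_xy; have := notblk_y (b, h b r); rewrite /= eq_xy eqxx.
- by move=> eq_xy; have := notblk_x (b', h b' r'); rewrite /= -eq_xy eqxx.
Qed.

Definition block_perm h : {perm 'I_A} := perm (@block_permf_inj h).

Lemma block_perm_blk h b r : block_perm h (blk b r) = blk b (h b r).
Proof. by rewrite permE block_permf_blk. Qed.

Definition block_key (s : {perm 'I_A}) b (r : 'I_n) : nat := s (blk b r).

Lemma block_key_inj s b : injective (block_key s b).
Proof. by move=> r r' /val_inj /perm_inj /blk_inj []. Qed.

Definition block_order s b : {perm 'I_n} := perm (ord_rank_inj (@block_key_inj s b)).

Lemma block_order_lt s b r r' :
  (block_order s b r < block_order s b r') = prefers s (blk b r) (blk b r').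
Proof. by rewrite !permE ord_rank_lt //; apply: block_key_inj. Qed.

Lemma block_order_mul h s b :
  block_order (block_perm h * s) b = (h b * block_order s b)%g.
Proof.
apply/permP => r; rewrite permM !permE; apply: ord_rank_perm => r'.
by rewrite /block_key permM block_perm_blk.
Qed.

Definition block_orders (P : profile A I) b : {ffun 'I_I -> {perm 'I_n}} :=
  [ffun i => block_order (P i) b].

Lemma circulant_of_covers_rotations P b :
  covers_rotations (block_orders P b) -> circulant_pathology P n.
Proof.
move=> /subsetP covers.
have /fin_all_exists [ind indE] :
    forall j : 'I_n, exists i, block_order (P i) b = (rot j)^-1%g.
  move=> j; have /codomP [i] : ((rot j)^-1)%g \in codom (block_orders P b).
    by apply/covers/imset_f.
  by rewrite ffunE => ->; exists i.
exists (fun x => blk b (inord x)), (fun x => ind (inord x)); split; [|split].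
- move=> x y; rewrite !inE => ltxn ltyn /blk_inj [_ /(congr1 val)].
  by rewrite /= !inordK.
- move=> x y; rewrite !inE => ltxn ltyn /(congr1 (fun i => block_order (P i) b)).
  by rewrite !indE => /invg_inj /rot_inj /(congr1 val); rewrite /= !inordK.
- move=> j t u ltjn lttu ltun.
  have rotE x : x < n -> inord ((j + x) %% n) = rot (inord j) (inord x) :> 'I_n.
    by move=> ltxn; apply: val_inj; rewrite /= rot_val !inordK // ltn_pmod.
  rewrite !rotE ?(ltn_trans lttu) // -block_order_lt indE !permK.
  by rewrite !inordK // (ltn_trans lttu).
Qed.

Definition all_blocks_uncovered (P : profile A I) : bool :=
  [forall b, ~~ covers_rotations (block_orders P b)].

Lemma prob_circ_ge_uncovered :
  (1 - #|[set P : profile A I | all_blocks_uncovered P]|%:R / #|[set: profile A I]|%:R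
   <= prob_circ A I n)%R.
Proof.
have card_gt0 : (0 < #|[set: profile A I]|%:R :> rat)%R.
  by rewrite ltr0n; apply/card_gt0P; exists 1%g.
rewrite /prob_circ lerBlDr -mulrDl ler_pdivlMr // mul1r -natrD ler_nat.
rewrite cardsT -(cardsC [set P : profile A I | all_blocks_uncovered P]) addnC leq_add2r.
apply/subset_leq_card/subsetP => P; rewrite !inE => /forallPn [b].
by rewrite negbK => covers; apply/asboolP; exists n; split => //;
  apply: circulant_of_covers_rotations covers.
Qed.

Definition block_act (P : profile A I) (z : {ffun 'I_m -> {ffun 'I_I -> {perm 'I_n}}}) :
  profile A I := [ffun i => block_perm [ffun b => z b i] * P i]%g.

Lemma block_orders_act P z b :
  block_orders (block_act P z) b = [ffun i => z b i * block_order (P i) b]%g.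
Proof. by apply/ffunP => i; rewrite !ffunE block_order_mul ffunE. Qed.

Lemma card_block_act_uncovered P :
  #|[set z | all_blocks_uncovered (block_act P z)]|
  = #|noncovering I k| ^ m.
Proof.
pose mulr_orders b (g : {ffun 'I_I -> {perm 'I_n}}) :=
  [ffun i => g i * block_order (P i) b]%g.
have mulr_orders_inj b : injective (mulr_orders b).
  by move=> g g' /ffunP eq_g; apply/ffunP => i; have := eq_g i; rewrite !ffunE; apply: mulIg.
rewrite (eq_card (B := [set z : {ffun 'I_m -> {ffun 'I_I -> {perm 'I_n}}} |
                          [forall b, ~~ covers_rotations (mulr_orders b (z b))]])).
  rewrite (card_ffun_forall (fun b g => ~~ covers_rotations (mulr_orders b g))).
  rewrite (eq_bigr (fun _ => #|noncovering I k|)) ?prod_nat_const ?card_ord // => b _.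
  rewrite -(card_preimset (noncovering I k) (mulr_orders_inj b)).
  by apply: eq_card => g; rewrite !inE.
by move=> z; rewrite !inE; apply: eq_forallb => b; rewrite block_orders_act.
Qed.

Lemma prob_all_blocks_uncovered :
  (#|[set P : profile A I | all_blocks_uncovered P]|%:R / #|[set: profile A I]|%:R
   = (#|noncovering I k|%:R / (n`! ^ I)%N%:R) ^+ m :> rat)%R.
Proof.
have act_inj z : injective (block_act^~ z).
  by move=> P Q /ffunP eq_act; apply/ffunP => i; have := eq_act i;
    rewrite !ffunE; apply: mulgI.
have := double_count (B := all_blocks_uncovered) act_inj card_block_act_uncovered.
rewrite card_ffun card_ffun card_Sn !card_ord -cardsT => counts.
apply/eqP; rewrite expr_div_n -!natrX eqr_div ?pnatr_eq0 -?lt0n ?expn_gt0 ?fact_gt0 //.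
  by rewrite -!natrM counts mulnC.
by apply/card_gt0P; exists 1%g.
Qed.

End Blocks.

Import Order.TTheory.
Local Open Scope ring_scope.

Lemma sumBk_ncover I d :
  (\sum_(d.+2 <= k < I.+1) Bk I d k) * ((d.+2)`!%:R) ^+ I
  = (ncover I d.+2 ((d.+2)`! - d.+2))%:R :> rat.
Proof.
set n := d.+2; set M := n`!.
have M_neq0 : M%:R != 0 :> rat by rewrite pnatr_eq0 -lt0n fact_gt0.
rewrite big_distrl /= big_geq_mkord /ncover natr_sum big_mkord big_mkcond /=.
apply: eq_bigr => [[k ltkI]] _ /=.
have [lenk | ltkn] := leqP n k; last by rewrite /nsurj stirling2_small // !muln0 !mul0n.
rewrite (_ : M%:R ^+ I = M%:R ^+ k * M%:R ^+ (I - k)); last by rewrite -exprD subnKC.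
have surj_part : (1 / M%:R) ^+ k * M%:R ^+ k = 1 :> rat.
  by rewrite -exprMn mul1r mulVf ?expr1n.
have rest_part : (1 - n%:R / M%:R) ^+ (I - k) * M%:R ^+ (I - k) = (M - n)%N%:R ^+ (I - k) :> rat.
  by rewrite -exprMn mulrBl mul1r mulfVK // natrB // fact_geq.
rewrite /Bk /nsurj -/n -/M; clearbody M; rewrite !natrM natrX -rest_part.
transitivity ('C(I, k)%:R * (stirling2 k n)%:R * M%:R * ((1 / M%:R) ^+ k * M%:R ^+ k)
   * ((1 - n%:R / M%:R) ^+ (I - k) * M%:R ^+ (I - k)) : rat); first ring.
by rewrite surj_part; ring.
Qed.

Lemma one_sub_sumBk I d :
  1 - \sum_(d.+2 <= k < I.+1) Bk I d k
  = #|noncovering I d.+1|%:R / ((d.+2)`! ^ I)%N%:R.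
Proof.
set M := ((d.+2)`! ^ I)%N.
have M_neq0 : M%:R != 0 :> rat by rewrite pnatr_eq0 -lt0n expn_gt0 fact_gt0.
have -> : \sum_(d.+2 <= k < I.+1) Bk I d k = (ncover I d.+2 ((d.+2)`! - d.+2))%:R / M%:R.
  by rewrite -sumBk_ncover natrX mulfK // -natrX.
by rewrite -{1}(divff M_neq0) -mulrBl /M -(card_noncovering I d.+1) natrD addrK.
Qed.

Theorem theorem3 (A I d : nat) (hA : (0 < A)%N) (hI : (0 < I)%N) (hd : (0 < d)%N)
  (hdmin : (d < minn I (A - 1))%N) :
  1 - (1 - \sum_(d.+2 <= k < I.+1) Bk I d k) ^+ (A %/ d.+2) <= prob_circ A I d.+2.
Proof.
have blocks_fit : (A %/ d.+2 * d.+2 <= A)%N := leq_divM A d.+2.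
apply: le_trans (prob_circ_ge_uncovered I blocks_fit).
by rewrite prob_all_blocks_uncovered one_sub_sumBk.
Qed.
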